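(* Let $k\ge 2$, $n\neq 2k$, $G\in\mathcal{M}_k(n,s)$, and let $i<j$ be vertices of $G$. Then: (i) if $\mathrm{sh}_{ij}(G)\in\mathrm{Cov}_k(n,s)$, then $G\in\mathrm{Cov}_k(n,s)$; (ii) if $\mathrm{sh}_{ij}(G)\in\mathrm{Cl}_k(n,s)$, then $G\in\mathrm{Cl}_k(n,s)$.
   Context: A $k$-uniform hypergraph ($k$-graph) $G=(V,E)$ consists of a finite vertex set $V\subseteq\mathbb{N}$ and a family $E$ of $k$-element subsets of $V$ (edges). A matching is a family of pairwise disjoint edges; $\mu(G)$ is the size of a largest matching in $G$. Let $\mathcal{H}_k(n,s)$ be the set of all $k$-graphs $G=(V,E)$ with $|V|=n$ and $\mu(G)=s$; let $\mu_k(n,s)=\max\{|E(G)|: G\in\mathcal{H}_k(n,s)\}$ and $\mathcal{M}_k(n,s)=\{G\in\mathcal{H}_k(n,s): |E(G)|=\mu_k(n,s)\}$. $\mathrm{Cov}_k(n,s)$ is the family of $k$-graphs $G=(V,E)$ with $|V|=n$ such that for some $S\subseteq V$ with $|S|=s$, $E=\{e\subseteq V: |e|=k,\ e\cap S\neq\emptyset\}$. $\mathrm{Cl}_k(n,s)$ is the family of $k$-graphs $G=(V,E)$ with $|V|=n$ such that for some $T\subseteq V$ with $|T|=ks+k-1$, $E=\{e\subseteq T: |e|=k\}$. For vertices $i<j$, the $(i,j)$-shift $\mathrm{sh}_{ij}(G)$ is the $k$-graph on $V$ obtained from $G$ by replacing each edge $e\in E$ with $j\in e$, $i\notin e$ and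 $(e\setminus\{j\})\cup\{i\}\notin E$ by the set $(e\setminus\{j\})\cup\{i\}$ (all other edges are kept). *)

From mathcomp Require Import all_boot finmap.
Set Implicit Arguments. Unset Strict Implicit. Unset Printing Implicit Defensive.
Local Open Scope fset_scope.

Record hgraph := HGraph { verts : {fset nat}; edges : {fset {fset nat}} }.

Definition is_kgraph (k : nat) (G : hgraph) : Prop :=
  forall e, e \in edges G -> e `<=` verts G /\ #|` e| = k.

Definition is_matching (G : hgraph) (M : {fset {fset nat}}) : Prop :=
  M `<=` edges G /\
  forall e f, e \in M -> f \in M -> e != f -> e `&` f = fset0.

Definition matching_number (G : hgraph) (s : nat) : Prop :=
  (exists M, is_matching G M /\ #|` M| = s) /\
  (forall M, is_matching G M -> #|` M| <= s).

Definition inH (k n s : nat) (G : hgraph) : Prop :=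
  is_kgraph k G /\ #|` verts G| = n /\ matching_number G s.

Definition inM (k n s : nat) (G : hgraph) : Prop :=
  inH k n s G /\ (forall G', inH k n s G' -> #|` edges G'| <= #|` edges G|).

Definition inCov (k n s : nat) (G : hgraph) : Prop :=
  #|` verts G| = n /\
  exists S : {fset nat}, S `<=` verts G /\ #|` S| = s /\
    forall e : {fset nat},
      e \in edges G <-> (e `<=` verts G /\ #|` e| = k /\ e `&` S <> fset0).

Definition inCl (k n s : nat) (G : hgraph) : Prop :=
  #|` verts G| = n /\
  exists T : {fset nat}, T `<=` verts G /\ #|` T| = k * s + k - 1 /\
    forall e : {fset nat}, e \in edges G <-> (e `<=` T /\ #|` e| = k).

Definition shift_edge (G : hgraph) (i j : nat) (e : {fset nat}) : {fset nat} :=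
  if [&& j \in e, i \notin e & (i |` (e `\ j)) \notin edges G]
  then i |` (e `\ j) else e.

Definition shift (i j : nat) (G : hgraph) : hgraph :=
  HGraph (verts G) [fset shift_edge G i j e | e in edges G].

From mathcomp Require Import all_boot finmap zify.
Set Implicit Arguments. Unset Strict Implicit. Unset Printing Implicit Defensive.
Local Open Scope fset_scope.

(* Let H = sh_ij(G). For R avoiding i and j, H contains j+R iff G contains
   both j+R and i+R, and i+R iff G contains one of them; so H determines G
   except on the "ambiguous" R, where G contains exactly one of the two.
   If the set S (resp. T) defining the cover (resp. clique) H contains both or
   neither of i, j, there is no ambiguous R and G = H; if it contains j but
   not i, H fails to be closed under the shift, as every shifted graph is.
   If it contains i but not j, the ambiguous R are the (k-1)-subsets of a set
   X, and |X| > 2(k-1) unless H is a clique with s = 1 (for a cover with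
   s = 1 this is where n <> 2k is used). Were j+A and i+B edges of G for
   disjoint ambiguous A, B, they would extend s-1 disjoint edges of H avoiding
   i, j, A, B to a matching of size s+1 in G; so by connectedness of the
   Kneser graph G makes the same choice for every ambiguous R, and G is H or
   H with i and j exchanged, again a cover (clique). The remaining cases are
   degenerate: an extremal G is complete when n < k(s+1), and for s = 1 and
   n > 2k a star has more edges than any clique of size 2k-1. *)

Lemma exists_fsubset_card (A : {fset nat}) m :
  m <= #|`A| -> exists2 B, B `<=` A & #|`B| = m.
Proof.
elim: m => [|m IH] hm; first by exists fset0; rewrite ?fsub0set ?cardfs0.
have [B BA cB] := IH (ltnW hm).
have /fsubsetPn [x xA xB] : ~~ (A `<=` B) by apply/negP => /fsubset_leq_card; lia.
by exists (x |` B); rewrite ?fsubUset ?fsub1set ?xA ?BA // cardfsU1 xB cB.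
Qed.

Lemma fsetI_neq0P (A B : {fset nat}) :
  A `&` B <> fset0 <-> exists2 x, x \in A & x \in B.
Proof.
split=> [/eqP /fset0Pn [x /fsetIP [xA xB]]|[x xA xB] AB0]; first by exists x.
by have := in_fset0 x; rewrite -AB0 inE xA xB.
Qed.

(* Connectedness of the Kneser graph on the m-subsets of X when |X| > 2m. *)
Lemma kneser_constant (X : {fset nat}) m (c : pred {fset nat}) :
  2 * m < #|`X| ->
  (forall A B, A `<=` X -> B `<=` X -> #|`A| = m -> #|`B| = m ->
     [disjoint A & B] -> c A -> c B) ->
  forall A B, A `<=` X -> B `<=` X -> #|`A| = m -> #|`B| = m -> c A -> c B.
Proof.
move=> ltX cdisj.
have exchange A a b : A `<=` X -> #|`A| = m -> a \in A -> b \in X -> b \notin A ->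
    c A -> c (b |` (A `\ a)).
  move=> AX cA aA bX bA cA1.
  (* Any m-subset of X avoiding b + A is disjoint from both A and b + A - a. *)
  have [C CX cC] : exists2 C, C `<=` X `\` (b |` A) & #|`C| = m.
    apply: exists_fsubset_card.
    by rewrite cardfsDS ?fsubUset ?fsub1set ?bX // cardfsU1 bA cA; lia.
  have /fsubsetDP [CX' dC] := CX.
  have A'X : b |` (A `\ a) `<=` X.
    by rewrite fsubUset fsub1set bX (fsubset_trans (fsubD1set _ _) AX).
  apply: (cdisj C) => //.
  - by rewrite cardfsU1 in_fsetD1 (negbTE bA) andbF -cA (cardfsD1 a A) aA.
  - by apply: fdisjointWr dC; apply: fsetUS; exact: fsubD1set.
  - apply: (cdisj A) => //; rewrite fdisjoint_sym.
    by apply: fdisjointWr dC; exact: fsubsetU1.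
move=> A B AX BX cA cB; move: {2}#|`A `\` B| (erefl #|`A `\` B|) => d.
elim: d A AX cA => [|d IH] A AX cA dA.
  have AB : A `<=` B by rewrite -fsetD_eq0 -cardfs_eq0 dA.
  by have /eqP -> : A == B by rewrite eqEfcard AB cA cB leqnn.
have /fset0Pn [a /fsetDP [aA aB]] : A `\` B != fset0 by rewrite -cardfs_gt0 dA.
have /fset0Pn [b /fsetDP [bB bA]] : B `\` A != fset0.
  by rewrite -cardfs_gt0; move: dA; rewrite !cardfsD fsetIC cA cB; lia.
have bX := fsubsetP BX b bB.
move=> cA1; apply: (IH (b |` (A `\ a))); last exact: exchange.
- by rewrite fsubUset fsub1set bX (fsubset_trans (fsubD1set _ _) AX).
- by rewrite cardfsU1 in_fsetD1 (negbTE bA) andbF /= -cA (cardfsD1 a A) aA.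
- rewrite (cardfsD1 a (A `\` B)) inE aA aB /= in dA.
  suff -> : (b |` (A `\ a)) `\` B = (A `\` B) `\ a by move: dA; rewrite add1n => /succn_inj.
  apply/fsetP => x; rewrite !inE; case: (eqVneq x b) => [->|_] /=; first by rewrite bB andbF.
  by case: (x \in B); case: (x == a).
Qed.

Definition pairwise_disjoint (M : {fset {fset nat}}) : Prop :=
  forall e f, e \in M -> f \in M -> e != f -> e `&` f = fset0.

Lemma card_disjoint_family k (V : {fset nat}) (M : {fset {fset nat}}) :
  (forall e, e \in M -> e `<=` V /\ #|`e| = k) -> pairwise_disjoint M ->
  #|`M| * k <= #|`V|.
Proof.
move: {2}#|`M| (erefl #|`M|) => c; elim: c M V => [|c IH] M V cM MV dM.
  by rewrite cM.
have /fset0Pn [e eM] : M != fset0 by rewrite -cardfs_gt0 cM.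
have [eV ek] := MV e eM.
have cM' : #|`M `\ e| = c by move: cM; rewrite (cardfsD1 e) eM; lia.
suff : c * k <= #|`V `\` e|.
  by rewrite cM cardfsDS // ek; have := fsubset_leq_card eV; lia.
rewrite -cM'; apply: IH => //; last by move=> f g /fsetD1P [_ fM] /fsetD1P [_ gM]; apply: dM.
move=> f /fsetD1P [fe fM]; have [fV fk] := MV f fM; split=> //.
by rewrite fsubsetD fV -fsetI_eq0 (dM f e).
Qed.

Lemma pairwise_disjointU1 M e : e != fset0 -> pairwise_disjoint M ->
  (forall f, f \in M -> [disjoint e & f]) ->
  pairwise_disjoint (e |` M) /\ #|`e |` M| = #|`M|.+1.
Proof.
move=> e0 dM deM.
have eNM : e \notin M by apply/negP => /deM; rewrite -fsetI_eq0 fsetIid (negbTE e0).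
split; last by rewrite cardfsU1 eNM.
move=> f g /fset1UP [->|fM] /fset1UP [->|gM]; rewrite ?eqxx // => fg.
- exact: (eqP (deM _ gM)).
- by rewrite fsetIC; exact: (eqP (deM _ fM)).
- exact: dM.
Qed.

Lemma is_matchingU1 G M e : is_matching G M -> e \in edges G -> e != fset0 ->
  (forall f, f \in M -> [disjoint e & f]) ->
  is_matching G (e |` M) /\ #|`e |` M| = #|`M|.+1.
Proof.
move=> [MG dM] eG e0 deM; have [deM' ceM] := pairwise_disjointU1 e0 dM deM.
by do 2!split=> //; rewrite fsubUset fsub1set eG MG.
Qed.

Lemma exists_disjoint_family_through k (A W : {fset nat}) :
  0 < k -> A `<=` W -> #|`A| * k <= #|`W| ->
  exists M : {fset {fset nat}}, [/\ #|`M| = #|`A|, pairwise_disjoint M &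
    forall e, e \in M -> [/\ e `<=` W, #|`e| = k & exists2 x, x \in e & x \in A]].
Proof.
move=> k0; move: {2}#|`A| (erefl #|`A|) => c; elim: c A W => [|c IH] A W cA AW AkW.
  by exists fset0; rewrite cardfs0 cA; split=> // e; rewrite in_fset0.
have /fset0Pn [a aA] : A != fset0 by rewrite -cardfs_gt0 cA.
have [B /fsubsetDP [BW dBA] cB] : exists2 B, B `<=` W `\` A & #|`B| = k.-1.
  by apply: exists_fsubset_card; rewrite cardfsDS // cA; move: AkW; rewrite cA; nia.
have aB : a \notin B by apply: (fdisjointP_sym dBA).
pose e := a |` B.
have eW : e `<=` W by rewrite fsubUset fsub1set (fsubsetP AW) ?BW.
have ek : #|`e| = k by rewrite cardfsU1 aB cB; lia.
have cA' : #|`A `\ a| = c by move: cA; rewrite (cardfsD1 a) aA; lia.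
have A'W' : A `\ a `<=` W `\` e.
  rewrite fsubsetD (fsubset_trans (fsubD1set _ _) AW); apply/fdisjointP => x /fsetD1P [xa xA].
  by rewrite in_fset1U negb_or xa /=; apply: (fdisjointP_sym dBA).
have A'kW' : #|`A `\ a| * k <= #|`W `\` e|.
  by rewrite cA' cardfsDS // ek; move: AkW; rewrite cA; have := fsubset_leq_card eW; nia.
have [M [cM dM MW']] := IH _ _ cA' A'W' A'kW'.
have e0 : e != fset0 by rewrite -cardfs_gt0 ek.
have [deM ceM] : pairwise_disjoint (e |` M) /\ #|`e |` M| = #|`M|.+1.
  by apply: pairwise_disjointU1 => // f /MW' [/fsubsetDP [_]]; rewrite fdisjoint_sym.
exists (e |` M); split=> //; first by rewrite ceM cM cA' cA.
move=> f /fset1UP [->|/MW' [/fsubsetDP [fW _] fk [x xf /fsetD1P [_ xA]]]].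
  by split=> //; exists a; rewrite ?fset1U1.
by split=> //; exists x.
Qed.

Section Transposition.

Variables i j : nat.

Definition transp (x : nat) : nat := if x == i then j else if x == j then i else x.

Definition fset_transp (A : {fset nat}) : {fset nat} := transp @` A.

Lemma transpK : involutive transp.
Proof.
move=> x; rewrite /transp; case: (eqVneq x i) => [->|xi].
  by rewrite eqxx; case: (eqVneq j i) => [->|_]; rewrite ?eqxx.
by case: (eqVneq x j) => [->|xj]; rewrite ?eqxx // (negbTE xi) (negbTE xj).
Qed.

Lemma mem_fset_transp A x : (x \in fset_transp A) = (transp x \in A).
Proof. by rewrite -{1}(transpK x) mem_imfset //; exact: (can_inj transpK). Qed.

Lemma card_fset_transp A : #|` fset_transp A| = #|` A|.
Proof. by apply/eqP/card_in_imfsetP => x y _ _; exact: (can_inj transpK). Qed.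

Lemma fset_transp_id A : (i \in A) = (j \in A) -> fset_transp A = A.
Proof.
move=> ijA; apply/fsetP => x; rewrite mem_fset_transp /transp.
case: (eqVneq x i) => [->|_]; first by rewrite ijA.
by case: (eqVneq x j) => [->|_]; rewrite ?ijA.
Qed.

Lemma fset_transpK : involutive fset_transp.
Proof. by move=> A; apply/fsetP => x; rewrite !mem_fset_transp transpK. Qed.

Lemma fset_transpU1 R : i \notin R -> j \notin R ->
  fset_transp (j |` R) = i |` R /\ fset_transp (i |` R) = j |` R.
Proof.
move=> iR jR; suff tjR : fset_transp (j |` R) = i |` R by rewrite -tjR fset_transpK.
apply/fsetP => x; rewrite mem_fset_transp !in_fset1U /transp.
case: (eqVneq x i) => [->|xi]; first by rewrite !eqxx.
case: (eqVneq x j) xi => [-> ji|xj _]; last by rewrite (negbTE xj).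
by rewrite eq_sym (negbTE ji) (negbTE iR) (negbTE jR).
Qed.

Lemma fsubset_transp A B : (fset_transp A `<=` B) = (A `<=` fset_transp B).
Proof.
apply/fsubsetP/fsubsetP => sAB x; rewrite mem_fset_transp.
  by move=> xA; apply: sAB; rewrite mem_fset_transp transpK.
by move=> /sAB; rewrite mem_fset_transp transpK.
Qed.

Lemma fset_transp_eq0 A : (fset_transp A == fset0) = (A == fset0).
Proof. by rewrite -!cardfs_eq0 card_fset_transp. Qed.

Lemma fset_transpI_eq0 A B :
  fset_transp A `&` B = fset0 <-> A `&` fset_transp B = fset0.
Proof.
have -> : A `&` fset_transp B = fset_transp (fset_transp A `&` B).
  by apply/fsetP => x; rewrite !(inE, mem_fset_transp) transpK.
by split=> /eqP AB0; apply/eqP; rewrite ?fset_transp_eq0 // -fset_transp_eq0.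
Qed.

Lemma cover_transp V k S e : i \in V -> j \in V ->
  (fset_transp e `<=` V /\ #|`fset_transp e| = k /\ fset_transp e `&` S <> fset0) <->
  (e `<=` V /\ #|`e| = k /\ e `&` fset_transp S <> fset0).
Proof.
move=> iV jV; rewrite fsubset_transp fset_transp_id ?iV ?jV // card_fset_transp.
by rewrite fset_transpI_eq0.
Qed.

Lemma clique_transp T k e :
  (fset_transp e `<=` T /\ #|`fset_transp e| = k) <-> (e `<=` fset_transp T /\ #|`e| = k).
Proof. by rewrite fsubset_transp card_fset_transp. Qed.

End Transposition.

Section RelabelInvariance.

Variables (k n s i j : nat) (G1 G2 : hgraph).
Hypotheses (iV : i \in verts G1) (jV : j \in verts G1) (V21 : verts G2 = verts G1).
Hypothesis E21 : forall e, (e \in edges G2) = (fset_transp i j e \in edges G1).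

Lemma inCov_transp : inCov k n s G1 -> inCov k n s G2.
Proof.
move=> [nV [S [SV [cS HS]]]]; rewrite /inCov V21; split=> //.
exists (fset_transp i j S); split.
  by rewrite fsubset_transp fset_transp_id ?iV ?jV.
by split=> [|e]; rewrite ?card_fset_transp // E21 HS cover_transp.
Qed.

Lemma inCl_transp : inCl k n s G1 -> inCl k n s G2.
Proof.
move=> [nV [T [TV [cT HT]]]]; rewrite /inCl V21; split=> //.
exists (fset_transp i j T); split.
  by rewrite fsubset_transp fset_transp_id ?iV ?jV.
by split=> [|e]; rewrite ?card_fset_transp // E21 HT clique_transp.
Qed.

End RelabelInvariance.

Lemma fsetU1_inj (a : nat) (A B : {fset nat}) :
  a \notin A -> a \notin B -> a |` A = a |` B -> A = B.
Proof. by move=> aA aB AB; rewrite -(fsetU1K aA) AB fsetU1K. Qed.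

Section Shift.

Variables (G : hgraph) (i j : nat).
Hypothesis neq_ij : i != j.

Local Notation E := (edges G).
Local Notation H := (edges (shift i j G)).

Lemma shift_edgeP f :
  shift_edge G i j f = f \/
  [/\ shift_edge G i j f = i |` (f `\ j), j \in f, i \notin f & i |` (f `\ j) \notin E].
Proof.
rewrite /shift_edge; case: ifP => [/and3P [jf if_ nE]|_]; [right | left] => //.
Qed.

Lemma mem_shift_same e : (i \in e) = (j \in e) -> (e \in H) = (e \in E).
Proof.
move=> ije; apply/imfsetP/idP => [[f fE ef]|eE]; last first.
  by exists e; rewrite // /shift_edge ije; case: (j \in e).
rewrite {}ef in ije *; case: (shift_edgeP f) => [-> // | [eE jf if_ _]].
by move: ije; rewrite eE fset1U1 in_fset1U eq_sym (negbTE neq_ij) in_fsetD1 eqxx.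
Qed.

Lemma mem_shift_j R : i \notin R -> j \notin R ->
  (j |` R \in H) = (j |` R \in E) && (i |` R \in E).
Proof.
move=> iR jR; have ijR : i \notin j |` R by rewrite in_fset1U (negbTE neq_ij).
apply/imfsetP/andP => [[f fE]|[jRE iRE]]; last first.
  by exists (j |` R); rewrite // /shift_edge fsetU1K // iRE !andbF.
rewrite /shift_edge; case: ifP => [_ fR | + jRf]; first by move: ijR; rewrite fR fset1U1.
by subst f; rewrite fset1U1 ijR fsetU1K //= => /negbFE.
Qed.

Lemma mem_shift_i R : i \notin R -> j \notin R ->
  (i |` R \in H) = (j |` R \in E) || (i |` R \in E).
Proof.
move=> iR jR; have jiR : j \notin i |` R by rewrite in_fset1U eq_sym (negbTE neq_ij).
have ijR : i \notin j |` R by rewrite in_fset1U (negbTE neq_ij).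
apply/imfsetP/orP => [[f fE]|]; rewrite /shift_edge.
  case: ifP => [/and3P [jf if_ _] | _ ->]; last by right.
  move/(fsetU1_inj iR); rewrite in_fsetD1 negb_and if_ orbT => /(_ isT) ->.
  by left; rewrite fsetD1K.
have [iRE _ | iRE [jRE|//]] := boolP (i |` R \in E).
  by exists (i |` R); rewrite // (negbTE jiR).
by exists (j |` R); rewrite // fset1U1 ijR fsetU1K // iRE.
Qed.

Lemma card_shift : #|` H| = #|` E|.
Proof.
apply/eqP/card_in_imfsetP => f1 f2 f1E f2E.
case: (shift_edgeP f1) => [-> | [-> jf1 if1 nE1]];
  case: (shift_edgeP f2) => [-> | [-> jf2 if2 nE2]] //.
- by move=> f12; move: nE2; rewrite -f12 f1E.
- by move=> f12; move: nE1; rewrite f12 f2E.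
- move/(fsetU1_inj); rewrite !in_fsetD1 !negb_and if1 if2 !orbT => /(_ isT isT) E12.
  by rewrite -(fsetD1K jf1) E12 fsetD1K.
Qed.

Lemma shift_stable :
  (forall R, i \notin R -> j \notin R -> j |` R \in E -> i |` R \in E) ->
  shift i j G = G.
Proof.
move=> stable; rewrite /shift.
suff -> : [fset shift_edge G i j f | f in E] = E by case: (G).
rewrite -[RHS]imfset_id; apply: eq_in_imfset => f fE /=.
case: (shift_edgeP f) => [// | [_ jf if_ /negP[]]].
by apply: stable; rewrite ?fsetD1K // in_fsetD1 ?eqxx // negb_and if_ orbT.
Qed.

Variant ij_split_spec (e : {fset nat}) : Prop :=
  | IJSame of (i \in e) = (j \in e)
  | IJWithJ R of i \notin R & j \notin R & e = j |` R
  | IJWithI R of i \notin R & j \notin R & e = i |` R.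

Lemma ij_splitP e : ij_split_spec e.
Proof.
have [je|je] := boolP (j \in e); have [ie|ie] := boolP (i \in e).
- by apply: IJSame; rewrite ie je.
- by apply: (@IJWithJ _ (e `\ j)); rewrite ?fsetD1K // in_fsetD1 ?eqxx // negb_and ie orbT.
- apply: (@IJWithI _ (e `\ i)); rewrite ?fsetD1K // in_fsetD1 ?eqxx //.
  by rewrite negb_and (negbTE je) orbT.
- by apply: IJSame; rewrite (negbTE ie) (negbTE je).
Qed.

Lemma shift_closed R : i \notin R -> j \notin R ->
  j |` R \in H -> i |` R \in H.
Proof. by move=> iR jR; rewrite mem_shift_j ?mem_shift_i // => /andP [->]. Qed.

(* R is ambiguous when exactly one of j+R, i+R is an edge of G (ambiguousE):
   the shift keeps only i+R and forgets which of the two G had. *)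
Definition ambiguous R := [&& i \notin R, j \notin R, j |` R \notin H & i |` R \in H].

Lemma ambiguousE R : i \notin R -> j \notin R ->
  ambiguous R = (j |` R \in E) (+) (i |` R \in E).
Proof.
move=> iR jR; rewrite /ambiguous iR jR mem_shift_j ?mem_shift_i //.
by case: (j |` R \in E); case: (i |` R \in E).
Qed.

Lemma shift_eq_of_ambiguous :
  (forall R, ambiguous R -> i |` R \in E) -> shift i j G = G.
Proof.
move=> amb; apply: shift_stable => R iR jR jRE; have := amb R.
by rewrite ambiguousE // jRE; case: (i |` R \in E) => // /(_ isT).
Qed.

Lemma edges_transp_of_ambiguous :
  (forall R, ambiguous R -> j |` R \in E) ->
  forall e, (e \in E) = (fset_transp i j e \in H).
Proof.
move=> amb e; case: (ij_splitP e) => [ije | R iR jR -> | R iR jR ->].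
- by rewrite fset_transp_id // mem_shift_same.
- have := amb R; rewrite (fset_transpU1 iR jR).1 mem_shift_i // ambiguousE //.
  by case: (j |` R \in E); case: (i |` R \in E) => // ->.
- have := amb R; rewrite (fset_transpU1 iR jR).2 mem_shift_j // ambiguousE //.
  by case: (j |` R \in E); case: (i |` R \in E) => // ->.
Qed.

Lemma shift_eq_of_transp_invariant :
  (forall e, fset_transp i j e \in H -> e \in H) -> shift i j G = G.
Proof.
move=> inv; apply: shift_eq_of_ambiguous => R /and4P [iR jR /negP jRH iRH].
by case: jRH; apply: inv; rewrite (fset_transpU1 iR jR).1.
Qed.

Lemma no_disjoint_ambiguous_pair s A B M :
  matching_number G s -> ambiguous A -> ambiguous B -> [disjoint A & B] ->
  j |` A \in E -> j |` B \notin E ->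
  is_matching (shift i j G) M -> #|`M| = s.-1 -> 0 < s ->
  (forall f, f \in M -> [disjoint f & i |` (j |` (A `|` B))]) -> False.
Proof.
move=> [_ maxM] ambA ambB dAB jAE jBE [MH dM] cM s0 dMAB.
have [iA jA _ _] := and4P ambA; have [iB jB _ _] := and4P ambB.
have iBE : i |` B \in E by move: ambB; rewrite ambiguousE // (negbTE jBE).
have matchM : is_matching G M.
  split=> //; apply/fsubsetP => f fM; have /fdisjointP_sym nDf := dMAB f fM.
  rewrite -mem_shift_same ?(fsubsetP MH) //.
  by rewrite (negbTE (nDf i _)) ?(negbTE (nDf j _)) // !in_fset1U eqxx /= ?orbT.
have e0 a C : a |` C != fset0 by apply/fset0Pn; exists a; exact: fset1U1.
pose D := i |` (j |` (A `|` B)).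
have dDM f : f \in M -> [disjoint D & f] by move=> /dMAB; rewrite fdisjoint_sym.
have iBD : i |` B `<=` D by rewrite fsetUS // (fsubset_trans _ (fsubsetU1 _ _)) ?fsubsetUr.
have jAD : j |` A `<=` D.
  by rewrite fsubUset fsub1set !in_fset1U eqxx orbT /= (fsubset_trans (fsubsetUl A B)) //
    (fsubset_trans (fsubsetU1 j _)) ?fsubsetU1.
have [matchBM cBM] := is_matchingU1 matchM iBE (e0 _ i B) (fun f fM => fdisjointWl iBD (dDM f fM)).
have dA f : f \in i |` B |` M -> [disjoint j |` A & f].
  move=> /fset1UP [->|fM]; last exact: fdisjointWl jAD (dDM f fM).
  apply/fdisjointP => x /fset1UP [->|xA]; rewrite in_fset1U negb_or.
    by rewrite eq_sym neq_ij jB.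
  by rewrite (fdisjointP dAB x xA) andbT; apply: contraNneq iA => <-.
have [matchABM cABM] := is_matchingU1 matchBM jAE (e0 _ j A) dA.
by have := maxM _ matchABM; rewrite cABM cBM cM; clear -s0; lia.
Qed.

Lemma ambiguous_dichotomy s X m :
  matching_number G s -> 0 < s -> 2 * m < #|`X| ->
  (forall R, ambiguous R <-> R `<=` X /\ #|`R| = m) ->
  (forall A B, A `<=` X -> B `<=` X -> #|`A| = m -> #|`B| = m -> [disjoint A & B] ->
     exists2 M, is_matching (shift i j G) M /\ #|`M| = s.-1 &
       forall f, f \in M -> [disjoint f & i |` (j |` (A `|` B))]) ->
  shift i j G = G \/ forall e, (e \in E) = (fset_transp i j e \in H).
Proof.
move=> mG s0 ltX ambX matchX.
have constE := @kneser_constant X m (fun R => j |` R \in E) ltX.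
have {}constE A B : ambiguous A -> ambiguous B -> j |` A \in E -> j |` B \in E.
  move=> /ambX [AX cA] /ambX [BX cB]; apply: constE => // {A B AX BX cA cB}.
  move=> A B AX BX cA cB dAB jAE; apply: contraT => jBE.
  have [M [matchM cM] dMAB] := matchX A B AX BX cA cB dAB.
  have ambA : ambiguous A by apply/ambX.
  have ambB : ambiguous B by apply/ambX.
  by case: (no_disjoint_ambiguous_pair mG ambA ambB dAB jAE jBE matchM cM s0 dMAB).
have [R0 R0X cR0] : exists2 R0, R0 `<=` X & #|`R0| = m.
  by apply: exists_fsubset_card; clear -ltX; lia.
have ambR0 : ambiguous R0 by apply/ambX.
have [jR0E | jR0E] := boolP (j |` R0 \in E); [right | left].
  by apply: edges_transp_of_ambiguous => R ambR; exact: constE jR0E.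
apply: shift_eq_of_ambiguous => R ambR.
have [iR jR _ _] := and4P ambR.
have := ambR; rewrite ambiguousE //; case: (i |` R \in E) => //.
by rewrite addbF => /(constE _ _ ambR ambR0); rewrite (negbTE jR0E).
Qed.

End Shift.

Lemma exists_matching_inside k F (A W : {fset nat}) :
  0 < k -> A `<=` W -> #|`A| * k <= #|`W| ->
  (forall e, e `<=` W -> #|`e| = k -> (exists2 x, x \in e & x \in A) -> e \in edges F) ->
  exists2 M, is_matching F M /\ #|`M| = #|`A| & forall f, f \in M -> f `<=` W.
Proof.
move=> k0 AW AkW WF; have [M [cM dM MW]] := exists_disjoint_family_through k0 AW AkW.
exists M => [|f /MW [] //]; split=> //; split=> //.
by apply/fsubsetP => f /MW [fW fk fA]; apply: WF.
Qed.

Section CoverShift.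

Variables (k n s : nat) (G : hgraph) (i j : nat) (S : {fset nat}).
Hypotheses (iV : i \in verts G) (jV : j \in verts G) (neq_ij : i != j).
Hypotheses (SV : S `<=` verts G) (cS : #|`S| = s).
Hypothesis HS : forall e, e \in edges (shift i j G) <->
  e `<=` verts G /\ #|`e| = k /\ e `&` S <> fset0.

Local Notation V := (verts G).
Local Notation H := (edges (shift i j G)).

Lemma cover_shift_same : (i \in S) = (j \in S) -> shift i j G = G.
Proof.
move=> ijS; apply: shift_eq_of_transp_invariant => // e.
by rewrite !HS cover_transp // fset_transp_id.
Qed.

Hypotheses (k2 : 1 < k) (nV : #|`V| = n) (large : k * s.+1 <= n).

Lemma cover_shift_ji : i \notin S -> j \in S -> False.
Proof.
move=> iS jS.
have [R /fsubsetDP [RV dRiS] cR] : exists2 R, R `<=` V `\` (i |` S) & #|`R| = k.-1.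
  apply: exists_fsubset_card; rewrite cardfsDS ?fsubUset ?fsub1set ?iV //.
  by rewrite cardfsU1 iS cS nV; clear -k2 large; nia.
have RiS x : x \in R -> (x != i) && (x \notin S).
  by move=> /(fdisjointP dRiS); rewrite in_fset1U negb_or.
have iR : i \notin R by apply/negP => /RiS; rewrite eqxx.
have jR : j \notin R by apply/negP => /RiS; rewrite jS andbF.
have : j |` R \in H.
  apply/HS; split; first by rewrite fsubUset fsub1set jV RV.
  split; first by rewrite cardfsU1 jR cR; clear -k2; lia.
  by apply/fsetI_neq0P; exists j; rewrite ?fset1U1.
move/(shift_closed neq_ij iR jR)/HS => [_ [_]]; apply.
by apply/eqP/fdisjointP => x /fset1UP [->|/RiS /andP []].
Qed.

Lemma cover_ambiguous R : i \in S -> j \notin S ->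
  ambiguous G i j R <-> R `<=` V `\` (j |` S) /\ #|`R| = k.-1.
Proof.
move=> iS jS; split.
  case/and4P => iR jR /negP jRH /HS [iRV [ciR _]].
  have RV : R `<=` V := fsubset_trans (fsubsetU1 i R) iRV.
  split; last by move: ciR; rewrite cardfsU1 iR; clear; lia.
  rewrite fsubsetD RV; apply/fdisjointP => x xR; rewrite in_fset1U negb_or.
  rewrite (contraNneq _ jR) => [|<- //]; apply/negP => xS; apply: jRH; apply/HS.
  split; first by rewrite fsubUset fsub1set jV RV.
  split; first by rewrite cardfsU1 jR -ciR cardfsU1 iR.
  by apply/fsetI_neq0P; exists x; rewrite // in_fset1U xR orbT.
case=> /fsubsetDP [RV dRjS] cR.
have RjS x : x \in R -> (x != j) && (x \notin S).
  by move=> /(fdisjointP dRjS); rewrite in_fset1U negb_or.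
have iR : i \notin R by apply/negP => /RjS; rewrite iS andbF.
have jR : j \notin R by apply/negP => /RjS; rewrite eqxx.
apply/and4P; split=> //.
  apply/negP => /HS [_ [_]]; apply.
  by apply/eqP/fdisjointP => x /fset1UP [->|/RjS /andP []].
apply/HS; split; first by rewrite fsubUset fsub1set iV RV.
split; first by rewrite cardfsU1 iR cR; clear -k2; lia.
by apply/fsetI_neq0P; exists i; rewrite ?fset1U1.
Qed.

Lemma cover_matching A B : i \in S -> j \notin S ->
  A `<=` V `\` (j |` S) -> B `<=` V `\` (j |` S) -> #|`A| = k.-1 -> #|`B| = k.-1 ->
  [disjoint A & B] ->
  exists2 M, is_matching (shift i j G) M /\ #|`M| = s.-1 &
    forall f, f \in M -> [disjoint f & i |` (j |` (A `|` B))].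
Proof.
move=> iS jS /fsubsetDP [AV dA] /fsubsetDP [BV dB] cA cB dAB.
pose D := i |` (j |` (A `|` B)).
have DV : D `<=` V by rewrite !fsubUset !fsub1set iV jV AV BV.
have SD x : x \in S `\ i -> x \notin D.
  case/fsetD1P => xi xS; have xjS : x \in j |` S by rewrite in_fset1U xS orbT.
  rewrite !in_fset1U in_fsetU (negbTE xi) (negbTE (fdisjointP_sym dA x xjS)).
  rewrite (negbTE (fdisjointP_sym dB x xjS)) !orbF.
  by apply: contraNneq jS => <-.
have A0W : S `\ i `<=` V `\` D.
  by rewrite fsubsetD (fsubset_trans (fsubD1set _ _) SV); apply/fdisjointP.
have iA : i \notin A by apply: (fdisjointP_sym dA); rewrite in_fset1U iS orbT.
have iB : i \notin B by apply: (fdisjointP_sym dB); rewrite in_fset1U iS orbT.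
have jA : j \notin A by apply: (fdisjointP_sym dA); rewrite fset1U1.
have jB : j \notin B by apply: (fdisjointP_sym dB); rewrite fset1U1.
have cD : #|`D| = 2 * k.
  rewrite cardfsU1 !in_fset1U in_fsetU (negbTE neq_ij) (negbTE iA) (negbTE iB).
  rewrite cardfsU1 in_fsetU (negbTE jA) (negbTE jB).
  by have := cardfsUI A B; rewrite disjoint_fsetI0 // cardfs0 cA cB; clear -k2; lia.
have cA0 : #|`S `\ i| = s.-1 by move: cS; rewrite (cardfsD1 i S) iS; clear; lia.
have [M [mM cM] MD] : exists2 M, is_matching (shift i j G) M /\ #|`M| = #|`S `\ i| &
    forall f, f \in M -> f `<=` V `\` D.
  apply: exists_matching_inside (ltnW k2) A0W _ _.
    by rewrite cA0 cardfsDS // cD nV; clear -large; nia.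
  move=> e /fsubsetDP [eV _] ek [x xe /fsetD1P [_ xS]]; apply/HS; split=> //; split=> //.
  by apply/fsetI_neq0P; exists x.
by exists M => [|f /MD /fsubsetDP [] //]; rewrite -cA0.
Qed.

Hypotheses (n2k : n <> 2 * k) (mG : matching_number G s) (s0 : 0 < s).

Lemma cover_shift_ij : i \in S -> j \notin S -> inCov k n s G.
Proof.
move=> iS jS.
have ltX : 2 * k.-1 < #|`V `\` (j |` S)|.
  rewrite cardfsDS ?fsubUset ?fsub1set ?jV // cardfsU1 jS cS nV.
  have [s1|s2] : s = 1 \/ 1 < s by clear -s0; lia.
    by move: large; rewrite s1; clear -k2 n2k; lia.
  by clear -k2 s2 large; nia.
have HCov : inCov k n s (shift i j G) by split=> //; exists S.
have [eqG | Etr] := ambiguous_dichotomy neq_ij mG s0 ltX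
  (fun R => cover_ambiguous R iS jS) (fun A B => cover_matching iS jS).
  by rewrite -eqG.
apply: (inCov_transp (G1 := shift i j G) (G2 := G) iV jV (erefl _) Etr HCov).
Qed.

End CoverShift.

Section CliqueShift.

Variables (k n s : nat) (G : hgraph) (i j : nat) (T : {fset nat}).
Hypotheses (iV : i \in verts G) (jV : j \in verts G) (neq_ij : i != j).
Hypotheses (TV : T `<=` verts G) (cT : #|`T| = k * s + k - 1).
Hypothesis HT : forall e, e \in edges (shift i j G) <-> e `<=` T /\ #|`e| = k.

Local Notation H := (edges (shift i j G)).

Lemma clique_shift_same : (i \in T) = (j \in T) -> shift i j G = G.
Proof.
move=> ijT; apply: shift_eq_of_transp_invariant => // e.
by rewrite !HT clique_transp fset_transp_id.
Qed.

Hypotheses (k2 : 1 < k) (s0 : 0 < s).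

Lemma clique_shift_ji : i \notin T -> j \in T -> False.
Proof.
move=> iT jT.
have [R RTj cR] : exists2 R, R `<=` T `\ j & #|`R| = k.-1.
  by apply: exists_fsubset_card; move: cT; rewrite (cardfsD1 j T) jT; clear -k2 s0; nia.
move: RTj; rewrite fsubsetD1 => /andP [RT jR].
have iR : i \notin R by apply: contra iT; apply: (fsubsetP RT).
have : j |` R \in H.
  by apply/HT; rewrite fsubUset fsub1set jT RT cardfsU1 jR cR; split=> //; clear -k2; lia.
move/(shift_closed neq_ij iR jR)/HT => [/fsubsetP iRT _].
by move: iT; rewrite iRT ?fset1U1.
Qed.

Lemma clique_ambiguous R : i \in T -> j \notin T ->
  ambiguous G i j R <-> R `<=` T `\ i /\ #|`R| = k.-1.
Proof.
move=> iT jT; rewrite fsubsetD1; split.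
  case/and4P => iR jR _ /HT [iRT ciR].
  rewrite (fsubset_trans (fsubsetU1 i R) iRT) iR; split=> //.
  by move: ciR; rewrite cardfsU1 iR; clear; lia.
case=> /andP [RT iR] cR; have jR : j \notin R by apply: contra jT; apply: (fsubsetP RT).
apply/and4P; split=> //.
  by apply/negP => /HT [/fsubsetP jRT _]; move: jT; rewrite jRT ?fset1U1.
by apply/HT; rewrite fsubUset fsub1set iT RT cardfsU1 iR cR; split=> //; clear -k2; lia.
Qed.

Hypotheses (nV : #|`verts G| = n) (mG : matching_number G s) (s2 : 1 < s).

Lemma clique_matching A B : i \in T -> j \notin T ->
  A `<=` T `\ i -> B `<=` T `\ i -> #|`A| = k.-1 -> #|`B| = k.-1 -> [disjoint A & B] ->
  exists2 M, is_matching (shift i j G) M /\ #|`M| = s.-1 &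
    forall f, f \in M -> [disjoint f & i |` (j |` (A `|` B))].
Proof.
move=> iT jT ATi BTi cA cB dAB.
pose W := (T `\ i) `\` (A `|` B).
have cW : #|`W| = s.-1 * k.
  rewrite cardfsDS ?fsubUset ?ATi ?BTi //.
  have := cardfsUI A B; rewrite disjoint_fsetI0 // cardfs0 cA cB.
  by have := cardfsD1 i T; rewrite iT cT; clear -k2 s2; nia.
have [A0 A0W cA0] : exists2 A0, A0 `<=` W & #|`A0| = s.-1.
  by apply: exists_fsubset_card; rewrite cW; clear -k2; nia.
have [M [mM cM] MW] : exists2 M, is_matching (shift i j G) M /\ #|`M| = #|`A0| &
    forall f, f \in M -> f `<=` W.
  apply: exists_matching_inside (ltnW k2) A0W _ _; first by rewrite cA0 cW.
  move=> e eW ek _; apply/HT; split=> //.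
  exact: fsubset_trans eW (fsubset_trans (fsubsetDl _ _) (fsubD1set _ _)).
exists M => [|f /MW /fsubsetP fW]; first by rewrite -cA0.
apply/fdisjointP => x /fW /fsetDP [/fsetD1P [xi xT] xAB].
rewrite !in_fset1U (negbTE xi) (negbTE xAB) orbF /=.
by apply: contraNneq jT => <-.
Qed.

Lemma clique_shift_ij : i \in T -> j \notin T -> inCl k n s G.
Proof.
move=> iT jT.
have ltX : 2 * k.-1 < #|`T `\ i|.
  by have := cardfsD1 i T; rewrite iT cT; clear -k2 s2; nia.
have HCl : inCl k n s (shift i j G) by split=> //; exists T.
have [eqG | Etr] := ambiguous_dichotomy neq_ij mG s0 ltX
  (fun R => clique_ambiguous R iT jT) (fun A B => clique_matching iT jT).
  by rewrite -eqG.
apply: (inCl_transp (G1 := shift i j G) (G2 := G) iV jV (erefl _) Etr HCl).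
Qed.

End CliqueShift.

Definition star (V : {fset nat}) (k v : nat) : hgraph :=
  HGraph V [fset e in fpowerset V | (v \in e) && (#|`e| == k)].

Lemma mem_star V k v e :
  (e \in edges (star V k v)) = [&& e `<=` V, v \in e & #|`e| == k].
Proof. by rewrite !inE fpowersetE. Qed.

Lemma inH_star k n V v : 0 < k -> k <= n -> v \in V -> #|`V| = n ->
  inH k n 1 (star V k v).
Proof.
move=> k0 kn vV cV; split; first by move=> e; rewrite mem_star => /and3P [? _ /eqP].
split=> //; split.
  have [B BV cB] : exists2 B, B `<=` V `\ v & #|`B| = k.-1.
    by apply: exists_fsubset_card; move: cV kn; rewrite (cardfsD1 v V) vV; clear; lia.
  move: BV; rewrite fsubsetD1 => /andP [BV vB].
  exists [fset v |` B]; rewrite cardfs1; split=> //; split.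
    rewrite fsub1set mem_star fsubUset fsub1set vV BV fset1U1 cardfsU1 vB cB /=.
    by apply/eqP; clear -k0; lia.
  by move=> e f /fset1P -> /fset1P ->; rewrite eqxx.
move=> M [MF dM]; rewrite leqNgt; apply/negP => M2.
have /fset0Pn [e eM] : M != fset0 by rewrite -cardfs_gt0; clear -M2; lia.
have /fset0Pn [f /fsetD1P [fe fM]] : M `\ e != fset0.
  by rewrite -cardfs_gt0; move: M2; rewrite (cardfsD1 e M) eM; clear; lia.
have vin g : g \in M -> v \in g by move=> /(fsubsetP MF); rewrite mem_star => /and3P [].
by have := in_fset0 v; rewrite -(dM f e fM eM fe) inE !vin.
Qed.

Lemma card_complements (U : {fset nat}) (F : {fset {fset nat}}) :
  (forall e, e \in F -> e `<=` U) -> #|` [fset U `\` e | e in F]| = #|` F|.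
Proof.
move=> FU; apply/eqP/card_in_imfsetP => e1 e2 /FU e1U /FU e2U /= e12.
by rewrite -(fsetDK e1U) e12 fsetDK.
Qed.

(* Complementation in T + v maps the clique edges into the star at v, missing
   the star edges through a vertex outside T + v. *)
Lemma clique_lt_star k n F : 1 < k -> 2 * k < n -> inCl k n 1 F ->
  exists2 F', inH k n 1 F' & #|` edges F| < #|` edges F'|.
Proof.
move=> k2 ltn [nV [T [TV [cT HT]]]].
have [v /fsetDP [vV vT]] : exists v, v \in verts F `\` T.
  by apply/fset0Pn; rewrite -cardfs_gt0 cardfsDS // nV cT; clear -ltn; lia.
pose U := v |` T.
have UV : U `<=` verts F by rewrite fsubUset fsub1set vV TV.
have cU : #|`U| = 2 * k by rewrite cardfsU1 vT cT; clear -k2; lia.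
have [y /fsetDP [yV yU]] : exists y, y \in verts F `\` U.
  by apply/fset0Pn; rewrite -cardfs_gt0 cardfsDS // nV cU; clear -ltn; lia.
have [B0 B0T cB0] : exists2 B0, B0 `<=` T & #|`B0| = k - 2.
  by apply: exists_fsubset_card; rewrite cT; clear; lia.
exists (star (verts F) k v); first by apply: inH_star => //; clear -k2 ltn; lia.
pose es := v |` (y |` B0).
have es_star : es \in edges (star (verts F) k v).
  have vyB0 : v \notin y |` B0.
    rewrite in_fset1U negb_or (contra (fsubsetP B0T v) vT) andbT.
    by apply: contraNneq yU => <-; exact: fset1U1.
  have yB0 : y \notin B0.
    by apply: contra yU => /(fsubsetP B0T) yT; rewrite in_fset1U yT orbT.
  rewrite mem_star fset1U1 !fsubUset !fsub1set vV yV (fsubset_trans B0T TV).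
  by rewrite cardfsU1 vyB0 cardfsU1 yB0 cB0 /=; apply/eqP; clear -k2; lia.
have FU e : e \in edges F -> e `<=` U.
  by move=> /HT [eT _]; exact: fsubset_trans eT (fsubsetU1 v T).
pose comps := [fset U `\` e | e in edges F].
have sub : es |` comps `<=` edges (star (verts F) k v).
  rewrite fsubUset fsub1set es_star; apply/fsubsetP => _ /imfsetP [e eF ->] /=.
  have [eT ek] := (HT e).1 eF; rewrite mem_star in_fsetD fset1U1 andbT.
  rewrite (fsubset_trans (fsubsetDl _ _) UV) (contra (fsubsetP eT v)) //.
  by rewrite cardfsDS ?cU ?ek ?FU //; apply/eqP; clear; lia.
have es_comps : es \notin comps.
  apply/negP => /imfsetP [e _ ese]; have : y \in es by rewrite !in_fset1U eqxx orbT.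
  by rewrite ese in_fsetD (negbTE yU) andbF.
by have := fsubset_leq_card sub; rewrite cardfsU1 es_comps card_complements.
Qed.

Lemma shift_eq_of_matchless G i j : matching_number G 0 -> shift i j G = G.
Proof.
move=> [_ max0]; apply: shift_stable => R _ _ jRE.
have : is_matching G [fset j |` R].
  by split=> [|e f /fset1P -> /fset1P ->]; rewrite ?fsub1set ?eqxx.
by move/max0; rewrite cardfs1.
Qed.

Lemma extremal_complete k n s G : inM k n s G -> n < k * s.+1 ->
  forall e, e `<=` verts G -> #|`e| = k -> e \in edges G.
Proof.
move=> [[kG [nV [[M0 [mM0 cM0]] maxM]]] maxG] small e eV ek; apply: contraT => eE.
have : inH k n s (HGraph (verts G) (e |` edges G)).
  split; first by move=> f /fset1UP [->|/kG].
  split=> //; split.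
    exists M0; split=> //; case: mM0 => M0G dM0; split=> //.
    exact: fsubset_trans M0G (fsubsetU1 _ _).
  move=> M [MG dM]; have kM f : f \in M -> f `<=` verts G /\ #|`f| = k.
    by move=> /(fsubsetP MG) /fset1UP [->|/kG].
  have := card_disjoint_family kM dM; rewrite nV => Mk.
  by move: small; rewrite mulnC; clear -Mk; nia.
by move/maxG; rewrite /= cardfsU1 eE ltnn.
Qed.

Lemma shift_eq_of_complete k G i j : is_kgraph k G -> i \in verts G ->
  (forall e, e `<=` verts G -> #|`e| = k -> e \in edges G) -> shift i j G = G.
Proof.
move=> kG iV full; apply: shift_stable => R iR jR /kG [jRV jRk]; apply: full.
  by rewrite fsubUset fsub1set iV (fsubset_trans (fsubsetU1 j R) jRV).
by rewrite cardfsU1 iR -jRk cardfsU1 jR.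
Qed.

Lemma inCov_of_shift k n s G i j : 1 < k -> n <> 2 * k -> inM k n s G ->
  i \in verts G -> j \in verts G -> i != j -> 0 < s -> k * s.+1 <= n ->
  inCov k n s (shift i j G) -> inCov k n s G.
Proof.
move=> k2 n2k [[_ [nV mG]] _] iV jV ij s0 large HCov.
have [_ [S [SV [cS HS]]]] := HCov.
have same : (i \in S) = (j \in S) -> inCov k n s G.
  by move=> ijS; rewrite -(cover_shift_same iV jV ij HS ijS).
have [iS|iS] := boolP (i \in S); have [jS|jS] := boolP (j \in S).
- by apply: same; rewrite iS jS.
- exact: (cover_shift_ij iV jV ij SV cS HS k2 nV large n2k mG s0 iS jS).
- by case: (cover_shift_ji iV jV ij SV cS HS k2 nV large iS jS).
- by apply: same; rewrite (negbTE iS) (negbTE jS).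
Qed.

Lemma inCl_of_shift k n s G i j : 1 < k -> n <> 2 * k -> inM k n s G ->
  i \in verts G -> j \in verts G -> i != j -> 0 < s -> k * s.+1 <= n ->
  inCl k n s (shift i j G) -> inCl k n s G.
Proof.
move=> k2 n2k [[_ [nV mG]] maxG] iV jV ij s0 large HCl.
have [s1|s2] : s = 1 \/ 1 < s by clear -s0; lia.
  subst s; have ltn : 2 * k < n by clear -n2k large; lia.
  have [F' HF' ltF'] := clique_lt_star k2 ltn HCl.
  by have := maxG F' HF'; rewrite -(card_shift G i j); clear -ltF'; lia.
have [_ [T [TV [cT HT]]]] := HCl.
have same : (i \in T) = (j \in T) -> inCl k n s G.
  by move=> ijT; rewrite -(clique_shift_same ij HT ijT).
have [iT|iT] := boolP (i \in T); have [jT|jT] := boolP (j \in T).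
- by apply: same; rewrite iT jT.
- exact: (clique_shift_ij iV jV ij TV cT HT k2 s0 nV mG s2 iT jT).
- by case: (clique_shift_ji ij cT HT k2 s0 iT jT).
- by apply: same; rewrite (negbTE iT) (negbTE jT).
Qed.

Unset Implicit Arguments.

Theorem lemma5 (k n s : nat) (G : hgraph) (i j : nat) :
  2 <= k -> n <> 2 * k -> inM k n s G ->
  i \in verts G -> j \in verts G -> i < j ->
  (inCov k n s (shift i j G) -> inCov k n s G) /\
  (inCl k n s (shift i j G) -> inCl k n s G).
Proof.
move=> k2 n2k GM iV jV ltij; have ij : i != j by rewrite neq_ltn ltij.
have [[kG [_ mG]] _] := GM.
have [s0|s0] := posnP s.
  by rewrite shift_eq_of_matchless -?s0.
have [small|large] := ltnP n (k * s.+1).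
  by rewrite (shift_eq_of_complete j kG iV (extremal_complete GM small)).
by split; [exact: inCov_of_shift | exact: inCl_of_shift].
Qed.
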